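(* Let $p$ be a prime and $\mathcal{P}=(\mathbb{Z},\mathbb{Z},\mathbb{Z}_{(p)})$. Then: (1) $\mathcal{P}^1\widehat\Gamma$ is the preimage of $(2\mathbb{Z}^t_{(2)})^2$ under the projection $\widehat\Gamma\to(\mathbb{Z}^t_{(2)})^2\rtimes\mathbb{Z}$ (i.e. the subgroup generated by $\mathbb{Z}_{(2)}/\mathbb{Z}$ and $(2\mathbb{Z}^t_{(2)})^2$), and $\widehat\Gamma/\mathcal{P}^1\widehat\Gamma\cong(\mathbb{Z}/2)^2\times\mathbb{Z}$. (2) $\mathcal{P}^2\widehat\Gamma$ is the central subgroup $\mathbb{Z}_{(2)}/\mathbb{Z}$, and $\widehat\Gamma/\mathcal{P}^2\widehat\Gamma\cong(\mathbb{Z}^t_{(2)})^2\rtimes\mathbb{Z}$. (3) $\mathcal{P}^3\widehat\Gamma$ is the subgroup $(\mathbb{Z}_{(2)}\cap\mathbb{Z}_{(p)})/\mathbb{Z}$ of $\mathcal{P}^2\widehat\Gamma=\mathbb{Z}_{(2)}/\mathbb{Z}$, and $\mathcal{P}^2\widehat\Gamma/\mathcal{P}^3\widehat\Gamma$ is $0$ if $p=2$ and is isomorphic to $\mathbb{Z}[\frac1p]/\mathbb{Z}$ otherwise. Consequently, if $p=2$ then $\widehat\Gamma/\mathcal{P}^3\widehat\Gamma\cong(\mathbb{Z}^t_{(2)})^2\rtimes\mathbb{Z}$, and if $p$ is odd there is a central extension $1\to\mathbb{Z}[\frac1p]/\mathbb{Z}\to\widehat\Gamma/\mathcal{P}^3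\widehat\Gamma\to(\mathbb{Z}^t_{(2)})^2\rtimes\mathbb{Z}\to1$.
   Context: $\Gamma_{2k-1}=\langle x,y,t\mid [x,y]^{(2k-1)^2},\ [[x,y],t],\ [[x,y],x],\ [[x,y],y],\ txt^{-1}=x^{-1},\ tyt^{-1}=y^{-1}\rangle$; for $(2k-1)\mid(2\ell-1)$ the maps $\Gamma_{2k-1}\to\Gamma_{2\ell-1}$, $t\mapsto t$, $x\mapsto x^{(2\ell-1)/(2k-1)}$, $y\mapsto y^{(2\ell-1)/(2k-1)}$ form a direct system with colimit $\widehat\Gamma$ (the integral homology localization of $\Gamma=\Gamma_1$). $\widehat\Gamma$ is a central extension $1\to\mathbb{Z}_{(2)}/\mathbb{Z}\to\widehat\Gamma\to(\mathbb{Z}^t_{(2)})^2\rtimes\mathbb{Z}\to1$, where $\mathbb{Z}_{(2)}=\{a/b\in\mathbb{Q}: b\text{ odd}\}$, $\mathbb{Z}^t_{(2)}$ is $\mathbb{Z}_{(2)}$ with the generator $t$ of $\mathbb{Z}$ acting by $-1$, the central subgroup is the colimit of the subgroups generated by $[x,y]$ (with $[x,y]\in\Gamma_{2k-1}$ corresponding to $\frac1{(2k-1)^2}$), and the image of $x$ (resp. $y$) of $\Gamma_{2k-1}$ in the quotient is $(\frac1{2k-1},0)$ (resp. $(0,\frac1{2k-1})$) in $(\mathbb{Z}^t_{(2)})^2$. $\mathbb{Z}_{(p)}$ is the localization of $\mathbb{Z}$ at $p$. For $\mathcal{P}=(R_0,R_1,R_2)$, $\mathcal{P}^0G=G$ and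 $\mathcal{P}^{n+1}G=\ker\big(\mathcal{P}^nG\to(\mathcal{P}^nG/[\mathcal{P}^nG,\mathcal{P}^nG])\otimes_{\mathbb{Z}}R_n\big)$. *)

From HB Require Import structures.
From mathcomp Require Import all_boot all_order all_algebra.
Set Implicit Arguments. Unset Strict Implicit. Unset Printing Implicit Defensive.
Import Order.TTheory GRing.Theory Num.Theory.
Local Open Scope ring_scope.

Definition Zloc (p : nat) : pred rat := fun x => ~~ (p %| `|denq x|)%N.
Definition Zint : pred rat := fun x => denq x == 1.
Definition Zinvp (p : nat) (x : rat) : Prop := exists k : nat, `|denq x|%N = (p ^ k)%N.

(* fractional part: representative in [0,1) of a class of Q/Z *)
Definition frac (x : rat) : rat := x - (Num.floor x)%:~R.

Definition is_hom_on (T U : Type) (mulT : T -> T -> T) (H : T -> Prop)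
  (mulU : U -> U -> U) (f : T -> U) : Prop :=
  forall g h, H g -> H h -> f (mulT g h) = mulU (f g) (f h).

Definition is_Rmod (R : pred rat) (M : zmodType) (act : rat -> M -> M) : Prop :=
  [/\ forall m, act 1 m = m,
      forall x y m, R x -> R y -> act (x * y) m = act x (act y m),
      forall x y m, R x -> R y -> act (x + y) m = act x m + act y m
    & forall x m m', R x -> act x (m + m') = act x m + act x m'].

(* For a group H (carrier predicate on T, product mul), the kernel of
   H -> H/[H,H] (x)_Z R, via the universal property of H^ab (x) R:
   h maps to 0 iff every group homomorphism from H to an R-module kills h. *)
Definition tensor_ker (T : Type) (mul : T -> T -> T) (H : T -> Prop)
  (R : pred rat) : T -> Prop :=
  fun h => H h /\
    forall (M : zmodType) (act : rat -> M -> M), is_Rmod R act ->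
    forall f : T -> M, is_hom_on mul H +%R f -> f h = 0.

Fixpoint Pser (T : Type) (mul : T -> T -> T) (G : T -> Prop)
  (R : nat -> pred rat) (n : nat) : T -> Prop :=
  match n with
  | 0 => G
  | n'.+1 => tensor_ker mul (Pser mul G R n') (R n')
  end.

Definition PZZp (p : nat) (n : nat) : pred rat :=
  if (n < 2)%N then Zint else Zloc p.

(** Element (a,b,c,n) stands for (c in Z_(2)/Z) . h(a,b) . t^n, with
   a,b in Z_(2), c in [0,1) /\ Z_(2) (representative of Z_(2)/Z), n in Z.
   x of Gamma_{2k-1} is (1/(2k-1),0,0,0), y is (0,1/(2k-1),0,0), t is (0,0,0,1),
   [x,y] is (0,0,1/(2k-1)^2,0). *)
Record Gh := MkGh { ga : rat; gb : rat; gc : rat; gn : int }.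

Definition sgnz (n : int) : rat := if odd `|n|%N then -1 else 1.

Definition Ghmul (g h : Gh) : Gh :=
  MkGh (ga g + sgnz (gn g) * ga h) (gb g + sgnz (gn g) * gb h)
       (frac (gc g + gc h + ga g * (sgnz (gn g) * gb h))) (gn g + gn h).

Definition Ghinv (g : Gh) : Gh :=
  MkGh (- (sgnz (gn g) * ga g)) (- (sgnz (gn g) * gb g))
       (frac (ga g * gb g - gc g)) (- gn g).

Definition Gh1 : Gh := MkGh 0 0 0 0.

Definition Ghat (g : Gh) : Prop :=
  [/\ Zloc 2 (ga g), Zloc 2 (gb g), Zloc 2 (gc g) & 0 <= gc g < 1].

Definition Gcomm (g h : Gh) : Gh := Ghmul (Ghmul g h) (Ghmul (Ghinv g) (Ghinv h)).

Definition PG (p : nat) : nat -> Gh -> Prop := Pser Ghmul Ghat (PZZp p).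

(** * The quotient (Z^t_(2))^2 x| Z *)
Record SD := MkSD { sa : rat; sb : rat; sn : int }.
Definition SDmul (u v : SD) : SD :=
  MkSD (sa u + sgnz (sn u) * sa v) (sb u + sgnz (sn u) * sb v) (sn u + sn v).
Definition SD1 : SD := MkSD 0 0 0.
Definition SDcar (u : SD) : Prop := Zloc 2 (sa u) /\ Zloc 2 (sb u).

(** * Z[1/p]/Z, represented in [0,1) with addition mod 1 *)
Definition QZadd (x y : rat) : rat := frac (x + y).
Definition ZinvpZ (p : nat) (x : rat) : Prop := 0 <= x < 1 /\ Zinvp p x.

(* P^1 and P^2 are detected by the Z-module-valued maps g |-> (a mod 2, b mod 2, n) and
   g |-> (a, b, n). Conversely, every homomorphism to an abelian group kills them: t conjugates
   x^a to x^-a, so x^2a and y^2b die, and every central element is a commutator [x^a, y^b]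
   of elements of the previous term. For P^3 the test module is Q/Z_(p); a central element
   whose denominator d is prime to p has order d, which is invertible in Z_(p), so it dies in
   every Z_(p)-module. The quotient P^2/P^3 is then the p-primary part of Z_(2)/Z, computed
   by partial fractions. *)

From HB Require Import structures.
From mathcomp Require Import all_boot all_order all_algebra.
From mathcomp Require Import ring lra zify.
Import Order.TTheory GRing.Theory Num.Theory.
Set Implicit Arguments. Unset Strict Implicit. Unset Printing Implicit Defensive.
Local Open Scope ring_scope.

Lemma frac_ge0 x : 0 <= frac x.
Proof. by rewrite subr_ge0 floor_le. Qed.

Lemma frac_lt1 x : frac x < 1.
Proof. by rewrite ltrBlDl -[1]/(1%:~R : rat) -intrD floorD1_gt. Qed.

Lemma frac_small x : 0 <= x < 1 -> frac x = x.
Proof. by move=> x01; rewrite /frac (@floor_def _ x 0) ?subr0 //= add0r. Qed.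

Lemma frac_idem x : frac (frac x) = frac x.
Proof. by rewrite frac_small // frac_ge0 frac_lt1. Qed.

Lemma subr_frac_int x : x - frac x \is a Num.int.
Proof. by rewrite /frac opprB addrC subrK intr_int. Qed.

Lemma frac_subr_int x : frac x - x \is a Num.int.
Proof. by rewrite -opprB rpredN subr_frac_int. Qed.

Lemma frac_eq x y : x - y \is a Num.int -> frac x = frac y.
Proof.
move=> xy_int; have -> : x = y + (x - y) by rewrite addrC subrK.
by rewrite /frac floorDrz // intrD (floorK xy_int); ring.
Qed.

Lemma frac_eq0 x : frac x = 0 <-> x \is a Num.int.
Proof.
split=> [fx0 | x_int]; first by have := subr_frac_int x; rewrite fx0 subr0.
by rewrite (@frac_eq x 0) ?subr0 // frac_small // lexx ltr01.
Qed.

Lemma frac0 : frac 0 = 0.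
Proof. by apply/frac_eq0; rewrite rpred0. Qed.

Lemma fracDl x y : frac (frac x + y) = frac (x + y).
Proof. by apply: frac_eq; rewrite opprD addrACA subrr addr0 frac_subr_int. Qed.

Lemma fracDr x y : frac (x + frac y) = frac (x + y).
Proof. by rewrite addrC fracDl addrC. Qed.

Lemma denq_dvd (n d : int) : d != 0 -> (denq (n%:~R / d%:~R) %| d)%Z.
Proof. by case: divqP => [_ /eqP //|k x _ _]; apply: dvdz_mull. Qed.

Section Localization.
Variable q : nat.
Hypothesis q_prime : prime q.

Lemma intr_neq0_ndvd (d : int) : ~~ (q %| `|d|)%N -> d%:~R != 0 :> rat.
Proof. by move=> qd; rewrite intr_eq0; apply: contra qd => /eqP ->; rewrite dvdn0. Qed.

Lemma ZlocP x :
  Zloc q x <-> exists n d : int, ~~ (q %| `|d|)%N /\ x = n%:~R / d%:~R.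
Proof.
split=> [xq | [n [d [qd ->]]]].
  by exists (numq x), (denq x); rewrite divq_num_den.
have d_neq0 : d != 0 by apply: contra qd => /eqP ->; rewrite dvdn0.
apply: contra qd => q_den; have /dvdzP [k ->] := denq_dvd n d_neq0.
by rewrite abszM dvdn_mull.
Qed.

Lemma ndvd_abszM (a b : int) :
  ~~ (q %| `|a|)%N -> ~~ (q %| `|b|)%N -> ~~ (q %| `|(a * b)%R|)%N.
Proof. by move=> qa qb; rewrite abszM Euclid_dvdM // negb_or qa qb. Qed.

Lemma ZlocD x y : Zloc q x -> Zloc q y -> Zloc q (x + y).
Proof.
move=> /ZlocP [n1 [d1 [q1 ->]]] /ZlocP [n2 [d2 [q2 ->]]].
apply/ZlocP; exists (n1 * d2 + n2 * d1), (d1 * d2); split; first exact: ndvd_abszM.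
have d1_neq0 := intr_neq0_ndvd q1; have d2_neq0 := intr_neq0_ndvd q2.
by rewrite intrD !intrM; field; rewrite d1_neq0 d2_neq0.
Qed.

Lemma ZlocM x y : Zloc q x -> Zloc q y -> Zloc q (x * y).
Proof.
move=> /ZlocP [n1 [d1 [q1 ->]]] /ZlocP [n2 [d2 [q2 ->]]].
apply/ZlocP; exists (n1 * n2), (d1 * d2); split; first exact: ndvd_abszM.
have d1_neq0 := intr_neq0_ndvd q1; have d2_neq0 := intr_neq0_ndvd q2.
by rewrite !intrM; field; rewrite d1_neq0 d2_neq0.
Qed.

Lemma ZlocV (d : int) : ~~ (q %| `|d|)%N -> Zloc q (d%:~R)^-1.
Proof. by move=> qd; apply/ZlocP; exists 1, d; rewrite div1r. Qed.

Lemma Zloc_intr (n : int) : Zloc q n%:~R.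
Proof.
apply/ZlocP; exists n, 1; rewrite divr1; split=> //.
by rewrite /= dvdn1; apply: contraTneq q_prime => ->.
Qed.

Lemma Zloc_nat (n : nat) : Zloc q n%:R.
Proof. by have := Zloc_intr n; rewrite -pmulrn. Qed.

Lemma Zloc0 : Zloc q 0. Proof. exact: Zloc_nat 0. Qed.
Lemma Zloc1 : Zloc q 1. Proof. exact: Zloc_nat 1. Qed.

Lemma Zloc_int x : x \is a Num.int -> Zloc q x.
Proof. by move=> x_int; rewrite -(floorK x_int) Zloc_intr. Qed.

Lemma ZlocN x : Zloc q x -> Zloc q (- x).
Proof. by move=> xq; rewrite -mulN1r ZlocM // (Zloc_intr (-1)). Qed.

Lemma ZlocB x y : Zloc q x -> Zloc q y -> Zloc q (x - y).
Proof. by move=> xq yq; rewrite ZlocD ?ZlocN. Qed.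

Lemma Zloc_frac x : Zloc q (frac x) <-> Zloc q x.
Proof.
split=> xq.
  by rewrite -[x](subrK (frac x)) ZlocD // Zloc_int // subr_frac_int.
by rewrite -[frac x](addrNK x) addrC ZlocD // Zloc_int // frac_subr_int.
Qed.

End Localization.

Lemma prime2 : prime 2. Proof. by []. Qed.

Definition in2Zloc (x : rat) : bool := Zloc 2 (x / 2).

Lemma in2ZlocD x y : in2Zloc x -> in2Zloc y -> in2Zloc (x + y).
Proof. by move=> x2 y2; rewrite /in2Zloc mulrDl ZlocD. Qed.

Lemma in2ZlocN x : in2Zloc x -> in2Zloc (- x).
Proof. by move=> x2; rewrite /in2Zloc mulNr ZlocN. Qed.

Lemma in2Zloc0 : in2Zloc 0.
Proof. by rewrite /in2Zloc mul0r (Zloc0 prime2). Qed.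

Lemma in2Zloc2 : in2Zloc 2.
Proof. by rewrite /in2Zloc divff // (Zloc1 prime2). Qed.

Lemma in2Zloc1 : ~~ in2Zloc 1.
Proof. by []. Qed.

Lemma in2Zloc_Zloc x : in2Zloc x -> Zloc 2 x.
Proof. by move=> x2; rewrite -[x](@divfK _ 2) // ZlocM. Qed.

Lemma in2Zloc_or x : Zloc 2 x -> in2Zloc x \/ in2Zloc (x + 1).
Proof.
move=> /ZlocP [n [d [d_odd ->]]]; have d_neq0 := intr_neq0_ndvd d_odd.
have half_in2Zloc (m : int) : (2 %| m)%Z -> in2Zloc (m%:~R / d%:~R).
  move=> /divzK em; apply/ZlocP; exists (m %/ 2)%Z, d; split=> //.
  rewrite -{1}em intrM -[2%:~R]/(2 : rat); field; by rewrite d_neq0.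
have [/half_in2Zloc | n_odd] := boolP (2 %| n)%Z; [by left | right].
have -> : n%:~R / d%:~R + 1 = (n + d)%:~R / d%:~R :> rat.
  by rewrite intrD; field; rewrite d_neq0.
by apply: half_in2Zloc; lia.
Qed.

Definition par (x : rat) : 'Z_2 := if in2Zloc x then 0 else 1.

Lemma par_eq0 x : par x = 0 <-> in2Zloc x.
Proof. by rewrite /par; case: (in2Zloc x). Qed.

Lemma parN x : par (- x) = par x.
Proof.
rewrite /par; case: (boolP (in2Zloc x)) => [/in2ZlocN -> // | x2].
by case: ifP => // /in2ZlocN; rewrite opprK (negbTE x2).
Qed.

Lemma parD x y : Zloc 2 x -> Zloc 2 y -> par (x + y) = par x + par y.
Proof.
move=> x2 y2; rewrite /par.
have in2ZlocBl u v : in2Zloc (u + v) -> in2Zloc u -> in2Zloc v.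
  by move=> uv u2; rewrite -(addKr u v) in2ZlocD ?in2ZlocN.
case: (boolP (in2Zloc x)) => [x_in | x_out]; case: (boolP (in2Zloc y)) => [y_in | y_out].
- by rewrite in2ZlocD // addr0.
- by case: ifP => [/in2ZlocBl/(_ x_in)|]; [rewrite (negbTE y_out) | rewrite add0r].
- by case: ifP => [|]; [rewrite addrC => /in2ZlocBl/(_ y_in); rewrite (negbTE x_out) | rewrite addr0].
have [/(negP x_out)[] | x1] := in2Zloc_or x2.
have [/(negP y_out)[] | y1] := in2Zloc_or y2.
have -> : in2Zloc (x + y).
  have -> : x + y = x + 1 + (y + 1) - 2 by ring.
  by apply: in2ZlocD; [apply: in2ZlocD | apply/in2ZlocN/in2Zloc2].
by apply: val_inj.
Qed.

Lemma par_onto (w : 'Z_2) : exists x, Zloc 2 x /\ par x = w.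
Proof.
have [-> | ->] : w = 0 \/ w = 1 by case: w => -[|[|//]] ?; [left|right]; apply: val_inj.
  by exists 0; rewrite /par in2Zloc0 (Zloc0 prime2).
by exists 1; rewrite /par (negbTE in2Zloc1) (Zloc1 prime2).
Qed.

Lemma sgnzE n : sgnz n = 1 \/ sgnz n = -1.
Proof. by rewrite /sgnz; case: ifP; [right | left]. Qed.

Lemma sgnz0 : sgnz 0 = 1. Proof. by []. Qed.
Lemma sgnz1 : sgnz 1 = -1. Proof. by []. Qed.

Lemma sgnzD m n : sgnz (m + n) = sgnz m * sgnz n.
Proof.
rewrite /sgnz; have -> : odd `|(m + n)%R|%N = odd `|m|%N (+) odd `|n|%N by lia.
by case: (odd `|m|%N); case: (odd `|n|%N); rewrite /= ?mulr1 ?mulN1r ?opprK.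
Qed.

Lemma sgnz_sq n : sgnz n * sgnz n = 1.
Proof. by case: (sgnzE n) => ->; rewrite ?mulr1 ?mulN1r ?opprK. Qed.

Lemma Zloc_sgnzM q n x : prime q -> Zloc q x -> Zloc q (sgnz n * x).
Proof. by move=> q_prime xq; case: (sgnzE n) => ->; rewrite ?mul1r // mulN1r ZlocN. Qed.

Lemma par_sgnzM n x : par (sgnz n * x) = par x.
Proof. by case: (sgnzE n) => ->; rewrite ?mul1r // mulN1r parN. Qed.

Lemma Ghat_c0 a b n : Zloc 2 a -> Zloc 2 b -> Ghat (MkGh a b 0 n).
Proof. by split; rewrite /= ?lexx ?ltr01 // (Zloc0 prime2). Qed.

Lemma Ghat1 : Ghat Gh1.
Proof. by apply: Ghat_c0; apply: (Zloc0 prime2). Qed.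

Lemma Ghat_mul g h : Ghat g -> Ghat h -> Ghat (Ghmul g h).
Proof.
case: g h => a b c n [a' b' c' n'] [/= a2 b2 c2 _] [/= a2' b2' c2' _]; split=> /=.
- by apply: ZlocD => //; apply: Zloc_sgnzM.
- by apply: ZlocD => //; apply: Zloc_sgnzM.
- apply/Zloc_frac => //; apply: ZlocD => //; first exact: ZlocD.
  by apply: ZlocM => //; apply: Zloc_sgnzM.
- by rewrite frac_ge0 frac_lt1.
Qed.

Lemma GhmulA g h k : Ghmul (Ghmul g h) k = Ghmul g (Ghmul h k).
Proof.
case: g h k => a1 b1 c1 n1 [a2 b2 c2 n2] [a3 b3 c3 n3].
rewrite /Ghmul /= !sgnzD; congr MkGh; try ring.
rewrite -addrA fracDl [in RHS](addrAC c1) fracDr; congr frac.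
by case: (sgnzE n1) => ->; ring.
Qed.

Lemma GhmulV g : Ghmul g (Ghinv g) = Gh1.
Proof.
case: g => a b c n; rewrite /Ghmul /Ghinv /Gh1 /=; congr MkGh.
- by rewrite mulrN mulrA sgnz_sq mul1r subrr.
- by rewrite mulrN mulrA sgnz_sq mul1r subrr.
- rewrite (addrAC c) fracDr; apply/frac_eq0.
  have -> : c + a * (sgnz n * - (sgnz n * b)) + (a * b - c) = (1 - sgnz n * sgnz n) * (a * b).
    by ring.
  by rewrite sgnz_sq subrr mul0r rpred0.
- by rewrite subrr.
Qed.

Lemma Gh1mul g : 0 <= gc g < 1 -> Ghmul Gh1 g = g.
Proof.
by case: g => a b c n /= c01; rewrite /Ghmul /= sgnz0 !mul1r !add0r mul0r addr0 frac_small.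
Qed.

Lemma Ghmul1 g : 0 <= gc g < 1 -> Ghmul g Gh1 = g.
Proof. by case: g => a b c n /= c01; rewrite /Ghmul /= !mulr0 !addr0 frac_small. Qed.

Lemma Gh1mul1 : Ghmul Gh1 Gh1 = Gh1.
Proof. by rewrite Gh1mul //= lexx ltr01. Qed.

Definition Gx (a : rat) : Gh := MkGh a 0 0 0.
Definition Gy (b : rat) : Gh := MkGh 0 b 0 0.
Definition Gz (c : rat) : Gh := MkGh 0 0 c 0.
Definition Gt : Gh := MkGh 0 0 0 1.

Lemma Gt_Gx a : Ghmul Gt (Gx (- a)) = Ghmul (Gx a) Gt.
Proof. by rewrite /Ghmul /= sgnz1 sgnz0 !(mulr0, mul0r, addr0, add0r, mulN1r, opprK). Qed.

Lemma Gt_Gy b : Ghmul Gt (Gy (- b)) = Ghmul (Gy b) Gt.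
Proof. by rewrite /Ghmul /= sgnz1 sgnz0 !(mulr0, mul0r, addr0, add0r, mulN1r, opprK). Qed.

Lemma GxD a a' : Ghmul (Gx a) (Gx a') = Gx (a + a').
Proof. by rewrite /Ghmul /= sgnz0 !(mulr0, mul0r, addr0, add0r, mul1r, frac0). Qed.

Lemma GyD b b' : Ghmul (Gy b) (Gy b') = Gy (b + b').
Proof. by rewrite /Ghmul /= sgnz0 !(mulr0, mul0r, addr0, add0r, mul1r, frac0). Qed.

Lemma GzD c c' : Ghmul (Gz c) (Gz c') = Gz (frac (c + c')).
Proof. by rewrite /Ghmul /= sgnz0 !(mulr0, mul0r, addr0, add0r). Qed.

Lemma Gz_central c h : Ghmul (Gz c) h = Ghmul h (Gz c).
Proof.
case: h => a b c' n; rewrite /Ghmul /= sgnz0 !(mulr0, mul0r, addr0, add0r, mul1r).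
by rewrite addrC.
Qed.

Lemma Gx_Gy_comm a b :
  Ghmul (Gx a) (Gy b) = Ghmul (Gz (frac (a * b))) (Ghmul (Gy b) (Gx a)).
Proof. by rewrite /Ghmul /= sgnz0 !(mulr0, mul0r, addr0, add0r, mul1r, frac0, frac_idem). Qed.

Lemma Gh_decomp a b c : 0 <= c < 1 ->
  MkGh a b c 0 = Ghmul (Ghmul (Gx a) (Gy b)) (Gz (frac (c - a * b))).
Proof.
move=> c01; rewrite /Ghmul /= sgnz0 !(mulr0, mul0r, addr0, add0r, mul1r) fracDl fracDr.
by rewrite addrC subrK frac_small.
Qed.

Lemma Ghat_Gz c : Zloc 2 c -> 0 <= c < 1 -> Ghat (Gz c).
Proof. by move=> c2 c01; split; rewrite //= (Zloc0 prime2). Qed.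

Lemma Ghat_Gx a : Zloc 2 a -> Ghat (Gx a).
Proof. by move=> a2; apply: Ghat_c0 => //; apply: (Zloc0 prime2). Qed.

Lemma Ghat_Gy b : Zloc 2 b -> Ghat (Gy b).
Proof. by move=> b2; apply: Ghat_c0 => //; apply: (Zloc0 prime2). Qed.

Lemma Ghat_Gt : Ghat Gt.
Proof. by apply: Ghat_c0; apply: (Zloc0 prime2). Qed.

Section HomOn.
Variables (T : Type) (mul : T -> T -> T) (H : T -> Prop).
Variables (M : zmodType) (f : T -> M).
Hypothesis f_hom : is_hom_on mul H +%R f.

Lemma hom_idem_eq0 e : H e -> mul e e = e -> f e = 0.
Proof. by move=> He ee; apply: (addIr (f e)); rewrite add0r -f_hom ?ee. Qed.

Lemma hom_conj_eq t u v : H t -> H u -> H v -> mul t u = mul v t -> f u = f v.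
Proof.
by move=> Ht Hu Hv tuv; apply: (addrI (f t)); rewrite -f_hom // tuv f_hom // addrC.
Qed.

(* An element conjugate to its inverse has 2-torsion image. *)
Lemma hom_sq_eq0 e t v w : H e -> mul e e = e -> H t -> H v -> H w ->
  mul t w = mul v t -> mul w v = e -> f (mul v v) = 0.
Proof.
move=> He ee Ht Hv Hw twvt wve.
by rewrite f_hom // -{1}(hom_conj_eq Ht Hw Hv twvt) -f_hom // wve hom_idem_eq0.
Qed.

Lemma hom_comm_eq0 x y c : H x -> H y -> H c -> H (mul y x) ->
  mul x y = mul c (mul y x) -> f c = 0.
Proof.
move=> Hx Hy Hc Hyx xy; apply: (addIr (f (mul y x))).
by rewrite add0r -f_hom // -xy !f_hom // addrC.
Qed.

End HomOn.

Definition actZ (M : zmodType) (x : rat) (m : M) : M := m *~ numq x.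

Lemma is_Rmod_actZ (M : zmodType) : is_Rmod Zint (@actZ M).
Proof.
have numqK_int x : Zint x -> x = (numq x)%:~R by move=> x_int; rewrite numqK // Qint_def.
split=> [m | x y m /numqK_int -> /numqK_int -> | x y m /numqK_int -> /numqK_int -> | x m m' _].
- by [].
- by rewrite /actZ -intrM !numq_int mulrC mulrzA.
- by rewrite /actZ -intrD !numq_int mulrzDr.
- by rewrite /actZ mulrzDl.
Qed.

Lemma tensor_ker_Zint_hom_eq0 (T : Type) (mul : T -> T -> T) (H : T -> Prop)
    (M : zmodType) (f : T -> M) g :
  tensor_ker mul H Zint g -> is_hom_on mul H +%R f -> f g = 0.
Proof. by move=> [_ g_ker] f_hom; apply: g_ker (is_Rmod_actZ M) _ f_hom. Qed.

Section RmodTheory.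
Variables (R : pred rat) (M : zmodType) (act : rat -> M -> M).
Hypothesis act_mod : is_Rmod R act.
Hypothesis R_nat : forall n : nat, R n%:R.

Lemma act0 x : R x -> act x 0 = 0.
Proof.
case: act_mod => _ _ _ actDr Rx.
by apply: (addIr (act x 0)); rewrite add0r -actDr // addr0.
Qed.

Lemma act_nat (n : nat) m : act n%:R m = m *+ n.
Proof.
have R0 : R 0 := R_nat 0.
case: act_mod => act1 _ actDl _; elim: n => [|n IHn].
  by rewrite mulr0n; apply: (addIr (act 0 m)); rewrite add0r -actDl // addr0.
by rewrite -addn1 natrD actDl // IHn act1 addn1 mulrSr.
Qed.

Lemma act_mulrn_eq0 (d : nat) (m : M) : d != 0%N -> R (d%:R)^-1 -> m *+ d = 0 -> m = 0.
Proof.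
case: act_mod => act1 actM _ _ d_neq0 Rd md.
have d_neq0' : d%:R != 0 :> rat by rewrite pnatr_eq0.
by rewrite -[m]act1 -(mulVf d_neq0') actM // act_nat md act0.
Qed.

End RmodTheory.

Lemma Ghat_hom_Gx_eq0 (M : zmodType) (f : Gh -> M) a :
  is_hom_on Ghmul Ghat +%R f -> in2Zloc a -> f (Gx a) = 0.
Proof.
move=> f_hom a2; rewrite [a]splitr -GxD.
apply: (hom_sq_eq0 f_hom (e := Gh1) (t := Gt) (w := Gx (- (a / 2)))).
- exact: Ghat1.
- exact: Gh1mul1.
- exact: Ghat_Gt.
- exact: Ghat_Gx.
- by apply: Ghat_Gx; apply: ZlocN.
- exact: Gt_Gx.
- by rewrite GxD addNr.
Qed.

Lemma Ghat_hom_Gy_eq0 (M : zmodType) (f : Gh -> M) b :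
  is_hom_on Ghmul Ghat +%R f -> in2Zloc b -> f (Gy b) = 0.
Proof.
move=> f_hom b2; rewrite [b]splitr -GyD.
apply: (hom_sq_eq0 f_hom (e := Gh1) (t := Gt) (w := Gy (- (b / 2)))).
- exact: Ghat1.
- exact: Gh1mul1.
- exact: Ghat_Gt.
- exact: Ghat_Gy.
- by apply: Ghat_Gy; apply: ZlocN.
- exact: Gt_Gy.
- by rewrite GyD addNr.
Qed.

Lemma Gy_Gx a b : Ghmul (Gy b) (Gx a) = MkGh a b 0 0.
Proof. by rewrite /Ghmul /= sgnz0 !(mulr0, mul0r, addr0, add0r, mul1r, frac0). Qed.

Lemma Ghat_hom_eq0 (M : zmodType) (f : Gh -> M) g :
  is_hom_on Ghmul Ghat +%R f -> Ghat g ->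
  in2Zloc (ga g) -> in2Zloc (gb g) -> gn g = 0 -> f g = 0.
Proof.
move=> f_hom; case: g => a b c n [/= a2 b2 c2 c01] a_in b_in /= ->.
set c' := frac (c - a * b).
have c'2 : Zloc 2 c' by apply/Zloc_frac => //; apply: ZlocB => //; apply: ZlocM.
have Ghat_Gz' : Ghat (Gz c') by apply: Ghat_Gz; rewrite ?frac_ge0 ?frac_lt1.
have fGz : f (Gz c') = 0.
  apply: (hom_comm_eq0 f_hom (x := Gx 1) (y := Gy c')).
  - exact/Ghat_Gx/(Zloc1 prime2).
  - exact: Ghat_Gy.
  - exact: Ghat_Gz'.
  - by rewrite Gy_Gx; apply: Ghat_c0 => //; apply: (Zloc1 prime2).
  - by rewrite Gx_Gy_comm mul1r frac_idem.
have Ghat_GxGy : Ghat (Ghmul (Gx a) (Gy b)) by apply: Ghat_mul; [apply: Ghat_Gx | apply: Ghat_Gy].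
rewrite (Gh_decomp a b c01) f_hom // f_hom ?Ghat_Gx ?Ghat_Gy //.
by rewrite Ghat_hom_Gx_eq0 // Ghat_hom_Gy_eq0 // fGz !addr0.
Qed.

Definition Ghab2 (g : Gh) : 'Z_2 * 'Z_2 * int := (par (ga g), par (gb g), gn g).

Lemma Ghab2_hom : is_hom_on Ghmul Ghat +%R Ghab2.
Proof.
move=> [a b c n] [a' b' c' n'] [/= a2 b2 _ _] [/= a2' b2' _ _].
by rewrite /Ghab2 /= !parD ?par_sgnzM //; apply: Zloc_sgnzM.
Qed.

Lemma Ghab2_eq0 g : Ghab2 g = 0 <-> [/\ in2Zloc (ga g), in2Zloc (gb g) & gn g = 0].
Proof.
split=> [[/par_eq0 a_in /par_eq0 b_in n0] | [/par_eq0 a0 /par_eq0 b0 n0]] //.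
by rewrite /Ghab2 a0 b0 n0.
Qed.

Lemma Ghab2_onto y : exists g, Ghat g /\ Ghab2 g = y.
Proof.
case: y => [[u v] n]; have [a [a2 <-]] := par_onto u; have [b [b2 <-]] := par_onto v.
by exists (MkGh a b 0 n); split; first exact: Ghat_c0.
Qed.

Lemma PG1E p g : PG p 1 g <-> [/\ Ghat g, in2Zloc (ga g), in2Zloc (gb g) & gn g = 0].
Proof.
split=> [g1 | [g_Ghat a_in b_in n0]].
  have [g_Ghat _] := g1.
  by have /Ghab2_eq0 [] := tensor_ker_Zint_hom_eq0 g1 Ghab2_hom.
by split=> // M act _ f f_hom; apply: Ghat_hom_eq0.
Qed.

Lemma PG1_hom_ga p : is_hom_on Ghmul (PG p 1) +%R ga.
Proof. by move=> g h /PG1E [_ _ _ n0] _; rewrite /= n0 sgnz0 mul1r. Qed.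

Lemma PG1_hom_gb p : is_hom_on Ghmul (PG p 1) +%R gb.
Proof. by move=> g h /PG1E [_ _ _ n0] _; rewrite /= n0 sgnz0 mul1r. Qed.

(* For c = u / d with d odd, b = (c - u d) / 2 = u (1 - d^2) / (2 d) lies in 2 Z_(2)
   because 8 divides 1 - d^2. *)
Lemma Zloc2_frac_double c : Zloc 2 c -> exists b, in2Zloc b /\ frac (2 * b) = frac c.
Proof.
move=> /ZlocP [u [d [d_odd c_ud]]]; have d_neq0 := intr_neq0_ndvd d_odd.
have [e de] : exists e : int, d = 2 * e + 1 by exists (d %/ 2)%Z; lia.
exists ((c - u%:~R * d%:~R) / 2); split.
  apply/ZlocP; exists (- u * e * (e + 1)), d; split=> //.
  move: d_neq0; rewrite c_ud de !intrD !intrM !intrN -[2%:~R]/(2 : rat) => d_neq0.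
  by field; rewrite d_neq0.
apply: frac_eq; rewrite mulrC divfK // addrAC subrr add0r.
by rewrite rpredN rpredM ?intr_int.
Qed.

Lemma PG2E p g : PG p 2 g <-> [/\ Ghat g, ga g = 0, gb g = 0 & gn g = 0].
Proof.
split=> [g2 | [g_Ghat a0 b0 n0]].
  have [/PG1E [g_Ghat _ _ n0] _] := g2.
  rewrite (tensor_ker_Zint_hom_eq0 g2 (@PG1_hom_ga p)).
  by rewrite (tensor_ker_Zint_hom_eq0 g2 (@PG1_hom_gb p)).
case: g g_Ghat a0 b0 n0 => a b c n [/= _ _ c2 c01] /= -> -> ->.
have PG1_c0 a' b' : in2Zloc a' -> in2Zloc b' -> PG p 1 (MkGh a' b' 0 0).
  by move=> a_in b_in; apply/PG1E; split=> //; apply: Ghat_c0; apply: in2Zloc_Zloc.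
have PG1_Gz x : Zloc 2 x -> 0 <= x < 1 -> PG p 1 (Gz x).
  by move=> x2 x01; apply/PG1E; split; rewrite /= ?in2Zloc0 //; apply: Ghat_Gz.
split; first exact: PG1_Gz.
move=> M act _ f f_hom; have [b2 [b2_in e2b]] := Zloc2_frac_double c2.
rewrite (frac_small c01) in e2b; rewrite -[MkGh 0 0 c 0]/(Gz c) -e2b.
apply: (hom_comm_eq0 f_hom (x := Gx 2) (y := Gy b2)).
- exact: PG1_c0 in2Zloc2 in2Zloc0.
- exact: PG1_c0 in2Zloc0 b2_in.
- by rewrite e2b; apply: PG1_Gz.
- by rewrite Gy_Gx; apply: PG1_c0 in2Zloc2 b2_in.
- exact: Gx_Gy_comm.
Qed.

Definition Ghproj (g : Gh) : SD := MkSD (ga g) (gb g) (gn g).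

Lemma Ghproj_presentation (K : Gh -> Prop) :
  (forall g, Ghat g -> K g <-> [/\ ga g = 0, gb g = 0 & gn g = 0]) ->
  [/\ is_hom_on Ghmul Ghat SDmul Ghproj,
      (forall g, Ghat g -> SDcar (Ghproj g)),
      (forall u, SDcar u -> exists g, Ghat g /\ Ghproj g = u)
    & (forall g, Ghat g -> (Ghproj g = SD1 <-> K g))].
Proof.
move=> KE; split=> [// | g [] // | [a b n] [/= a2 b2] | g g_Ghat].
  by exists (MkGh a b 0 n); split; first exact: Ghat_c0.
rewrite KE //; case: g {g_Ghat} => a b c n /=.
by split=> [[-> -> ->] | [-> -> ->]].
Qed.

Section ZlocQuotient.
Local Open Scope quotient_scope.
Variable q : nat.
Hypothesis q_prime : prime q.

Definition Zloc_pred : {pred rat} := fun x => Zloc q x.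

Lemma Zloc_zmod_closed : zmod_closed Zloc_pred.
Proof. by split=> [|x y]; [apply: Zloc0 | apply: ZlocB]. Qed.

HB.instance Definition _ := GRing.isZmodClosed.Build rat Zloc_pred Zloc_zmod_closed.

Definition QmodZloc := Quotient.quot Zloc_pred.

Definition QmodZloc_act (x : rat) (m : QmodZloc) : QmodZloc := \pi_QmodZloc (x * repr m).

Lemma piQmodZloc_eq x y : \pi_QmodZloc x = \pi_QmodZloc y <-> Zloc q (x - y).
Proof. by rewrite -[Zloc q _]/(_ \in Zloc_pred) Quotient.idealrBE; split=> /eqP. Qed.

Lemma repr_piQmodZloc x : Zloc q (repr (\pi_QmodZloc x) - x).
Proof. by apply/piQmodZloc_eq; rewrite reprK. Qed.

Lemma is_Rmod_QmodZloc : is_Rmod (Zloc q) QmodZloc_act.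
Proof.
split=> [m | x y m xq yq | x y m xq yq | x m m' xq]; rewrite /QmodZloc_act.
- by rewrite mul1r reprK.
- apply/piQmodZloc_eq.
  have -> : x * y * repr m - x * repr (\pi_QmodZloc (y * repr m)) =
    - (x * (repr (\pi_QmodZloc (y * repr m)) - y * repr m)) by ring.
  by apply: ZlocN => //; apply: ZlocM => //; apply: repr_piQmodZloc.
- by rewrite mulrDl pi_addr.
- rewrite -pi_addr; apply/piQmodZloc_eq; rewrite -mulrDr -mulrBr; apply: ZlocM => //.
  by apply/piQmodZloc_eq; rewrite pi_addr !reprK.
Qed.

End ZlocQuotient.

Section PG3.
Local Open Scope quotient_scope.
Variable p : nat.
Hypothesis p_prime : prime p.

Lemma PG2_Gz c : Zloc 2 c -> 0 <= c < 1 -> PG p 2 (Gz c).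
Proof. by move=> c2 c01; apply/PG2E; split=> //; apply: Ghat_Gz. Qed.

Lemma PG2_Gz_gc g : PG p 2 g -> g = Gz (gc g).
Proof. by case: g => a b c n /PG2E [_ /= -> -> ->]. Qed.

Lemma PG2_gc g : PG p 2 g -> Zloc 2 (gc g) /\ 0 <= gc g < 1.
Proof. by case/PG2E => -[]. Qed.

Lemma PG2_hom_piQmodZloc :
  is_hom_on Ghmul (PG p 2) +%R (fun g => \pi_(QmodZloc p_prime) (gc g)).
Proof.
move=> g h /PG2_Gz_gc -> /PG2_Gz_gc ->; rewrite GzD -pi_addr.
by apply/piQmodZloc_eq; apply: Zloc_int; rewrite //= frac_subr_int.
Qed.

(* [Gz c] has order the denominator of [c], which is invertible in Z_(p). *)
Lemma PG2_hom_Gz_eq0 (M : zmodType) (act : rat -> M -> M) (f : Gh -> M) c :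
  is_Rmod (Zloc p) act -> is_hom_on Ghmul (PG p 2) +%R f ->
  Zloc 2 c -> 0 <= c < 1 -> Zloc p c -> f (Gz c) = 0.
Proof.
move=> act_mod f_hom c2 c01 cp.
have PG2_Gz_frac x : Zloc 2 x -> PG p 2 (Gz (frac x)).
  by move=> x2; apply: PG2_Gz; rewrite ?frac_ge0 ?frac_lt1 ?Zloc_frac.
have f1 : f (Gz 0) = 0.
  by apply: (hom_idem_eq0 f_hom) Gh1mul1; apply: PG2_Gz; rewrite ?lexx ?ltr01 // Zloc0.
have fGz_mul k : f (Gz (frac (k%:R * c))) = f (Gz c) *+ k.
  elim: k => [|k IHk]; first by rewrite mul0r frac0 f1.
  rewrite -addn1 natrD mulrDl mul1r -fracDl -GzD f_hom ?IHk ?addn1 ?mulrSr //.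
    by apply: PG2_Gz_frac; rewrite ZlocM //; apply: Zloc_nat.
  by rewrite -(frac_small c01); apply: PG2_Gz_frac.
set D := `|denq c|%N.
have D_neq0 : D != 0%N by rewrite absz_eq0 denq_neq0.
have denq_D : (denq c)%:~R = D%:R :> rat by rewrite /D pmulrn absz_denq.
have DV : Zloc p (D%:R)^-1 by have := @ZlocV p D%:Z cp; rewrite -pmulrn.
apply: (act_mulrn_eq0 act_mod (Zloc_nat p_prime) D_neq0 DV).
by rewrite -fGz_mul -denq_D mulrC -numqE (frac_eq0 _).2 ?intr_int.
Qed.

Lemma PG3E g : PG p 3 g <-> PG p 2 g /\ Zloc p (gc g).
Proof.
split=> [[g2 g_ker] | [g2 cp]].
  split=> //; rewrite -[gc g]subr0; apply/(piQmodZloc_eq p_prime).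
  by rewrite pi_zeror; apply: g_ker (is_Rmod_QmodZloc p_prime) _ PG2_hom_piQmodZloc.
split=> // M act act_mod f f_hom; have [c2 c01] := PG2_gc g2.
by rewrite (PG2_Gz_gc g2); apply: PG2_hom_Gz_eq0 act_mod f_hom _ _ _.
Qed.

Lemma PG3_Gz c : Zloc 2 c -> 0 <= c < 1 -> Zloc p c -> PG p 3 (Gz c).
Proof. by move=> c2 c01 cp; apply/PG3E; split=> //; apply: PG2_Gz. Qed.

Lemma PG3_conj g h : PG p 3 g -> Ghat h -> PG p 3 (Ghmul (Ghmul h g) (Ghinv h)).
Proof.
move=> /PG3E [g2 cp] _; have [c2 c01] := PG2_gc g2.
by rewrite (PG2_Gz_gc g2) -Gz_central GhmulA GhmulV Ghmul1 //; apply: PG3_Gz.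
Qed.

Lemma PG2_comm g h : PG p 2 g -> Ghat h -> PG p 3 (Gcomm g h).
Proof.
move=> g2 _; rewrite (PG2_Gz_gc g2) /Gcomm Gz_central GhmulA -(GhmulA (Gz _)) GhmulV.
rewrite Gh1mul ?GhmulV /= ?frac_ge0 ?frac_lt1 //.
by apply: PG3_Gz; rewrite ?lexx ?ltr01 // Zloc0.
Qed.

End PG3.

Section PPart.
Variable p : nat.
Hypothesis p_prime : prime p.

Lemma expn_natr_neq0 k : ((p ^ k)%:R : rat) != 0.
Proof. by rewrite pnatr_eq0 -lt0n expn_gt0 prime_gt0. Qed.

Lemma ZinvpP x : Zinvp p x <-> exists (n : int) (k : nat), x = n%:~R / (p ^ k)%:R.
Proof.
split=> [[k Dk] | [n [k ->]]].
  by exists (numq x), k; rewrite -Dk pmulrn absz_denq divq_num_den.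
have pk_neq0 : (p ^ k)%:Z != 0 by rewrite -lt0n expn_gt0 prime_gt0.
have := denq_dvd n pk_neq0; rewrite -pmulrn => /(dvdn_pfactor _ _ p_prime) [j _ Dj].
by exists j.
Qed.

Lemma ZinvpD x y : Zinvp p x -> Zinvp p y -> Zinvp p (x + y).
Proof.
move=> /ZinvpP [n1 [k1 ->]] /ZinvpP [n2 [k2 ->]]; apply/ZinvpP.
exists (n1 * (p ^ k2)%:Z + n2 * (p ^ k1)%:Z), (k1 + k2).
have := expn_natr_neq0 k1; have := expn_natr_neq0 k2 => pk2_neq0 pk1_neq0.
by rewrite expnD natrM intrD !intrM -!pmulrn; field; rewrite pk1_neq0 pk2_neq0.
Qed.

Lemma Zinvp_int x : x \is a Num.int -> Zinvp p x.
Proof. by rewrite Qint_def => /eqP den1; exists 0%N; rewrite den1. Qed.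

Lemma Zinvp_frac x : Zinvp p x -> Zinvp p (frac x).
Proof.
move=> xp; rewrite -[frac x](addrNK x) addrC.
by apply: ZinvpD => //; apply/Zinvp_int/frac_subr_int.
Qed.

Lemma ZinvpB x y : Zinvp p x -> Zinvp p y -> Zinvp p (x - y).
Proof. by move=> xp [k Dk]; apply: ZinvpD => //; exists k; rewrite denqN. Qed.

Lemma Zinvp_Zloc_int x : Zinvp p x -> Zloc p x -> x \is a Num.int.
Proof.
move=> [[|k] Dk]; rewrite Qint_def /Zloc Dk; first by rewrite -absz_denq Dk.
by rewrite expnS dvdn_mulr.
Qed.

Lemma Zinvp_Zloc q x : prime q -> q != p -> Zinvp p x -> Zloc q x.
Proof.
move=> q_prime q_neq_p /ZinvpP [n [k ->]]; apply/ZlocP; exists n, (p ^ k)%:Z.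
by rewrite -pmulrn /= Euclid_dvdX // dvdn_prime2 // (negbTE q_neq_p).
Qed.

Definition ppart_spec (c y : rat) := [/\ 0 <= y < 1, Zinvp p y & Zloc p (c - y)].

Lemma ppart_spec_uniq c y y' : ppart_spec c y -> ppart_spec c y' -> y = y'.
Proof.
move=> [/andP [y_ge0 y_lt1] yp cy] [/andP [y'_ge0 y'_lt1] y'p cy'].
have /floorK yy' : y - y' \is a Num.int.
  apply: Zinvp_Zloc_int; first exact: ZinvpB.
  by rewrite (_ : y - y' = (c - y') - (c - y)); [apply: ZlocB | ring].
have : Num.floor (y - y') = 0.
  have : (-1 : int) < Num.floor (y - y') < 1 by rewrite -!(ltr_int rat) yy'; lra.
  by lia.
by move=> y_y'; apply/eqP; rewrite -subr_eq0 -yy' y_y'.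
Qed.

(* The p-primary part of c in Q/Z: with d = m p^k the denominator, p coprime to m,
   and u m + v p^k = 1, c = n u / p^k + n v / m. *)
Definition ppart (c : rat) : rat :=
  let k := logn p `|denq c| in
  let m := (`|denq c| %/ p ^ k)%N in
  frac ((numq c * (egcdz m (p ^ k)%N).1)%:~R / (p ^ k)%:R).

Lemma ppartP c : ppart_spec c (ppart c).
Proof.
rewrite /ppart; set D := `|denq c|%N; set k := logn p D; set m := (D %/ p ^ k)%N.
have D_gt0 : (0 < D)%N by rewrite absz_gt0 denq_neq0.
have [m' p_m' Dm'] := pfactor_coprime p_prime D_gt0.
have mm' : m = m' by rewrite /m {1}Dm' mulnK // expn_gt0 prime_gt0.
have m_neq0 : m%:R != 0 :> rat.
  by rewrite pnatr_eq0 -lt0n mm'; move: D_gt0; rewrite Dm' muln_gt0 => /andP [].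
have pk_neq0 := expn_natr_neq0 k.
have ec : c = (numq c)%:~R / (m%:R * (p ^ k)%:R).
  by rewrite -natrM mm' -Dm' /D pmulrn absz_denq divq_num_den.
case: egcdzP => u v /= uv_gcd _.
have uv1 : u%:~R * m%:R + v%:~R * (p ^ k)%:R = 1 :> rat.
  have : u * m%:Z + v * (p ^ k)%:Z = 1.
    by rewrite uv_gcd /gcdz /= mm' (eqP (coprimeXr _ _)) // coprime_sym.
  by move/(congr1 (fun z : int => z%:~R : rat)); rewrite intrD !intrM -!pmulrn.
have c_ppart : c - (numq c * u)%:~R / (p ^ k)%:R = (numq c * v)%:~R / m%:R.
  apply/eqP; rewrite -subr_eq0.
  have -> : c - (numq c * u)%:~R / (p ^ k)%:R - (numq c * v)%:~R / m%:R =
    (numq c)%:~R * (1 - (u%:~R * m%:R + v%:~R * (p ^ k)%:R)) / (m%:R * (p ^ k)%:R).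
    by rewrite {1}ec !intrM; field; rewrite m_neq0 pk_neq0.
  by rewrite uv1 subrr mulr0 mul0r.
split; first by rewrite frac_ge0 frac_lt1.
  by apply: Zinvp_frac; apply/ZinvpP; exists (numq c * u), k.
rewrite -(subrKA ((numq c * u)%:~R / (p ^ k)%:R)) c_ppart.
apply: ZlocD => //; last exact/Zloc_int/subr_frac_int.
by apply/ZlocP; exists (numq c * v), m; rewrite -pmulrn /= mm' -prime_coprime.
Qed.

Lemma ppart_fracD c c' : ppart (frac (c + c')) = frac (ppart c + ppart c').
Proof.
apply: (ppart_spec_uniq (ppartP _)).
have [_ yp cy] := ppartP c; have [_ y'p cy'] := ppartP c'.
split; first by rewrite frac_ge0 frac_lt1.
  by apply: Zinvp_frac; apply: ZinvpD.
set y := ppart c; set y' := ppart c'.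
have -> : frac (c + c') - frac (y + y') =
  (c - y) + (c' - y') + (frac (c + c') - (c + c')) - (frac (y + y') - (y + y')) by ring.
apply: ZlocB => //; last exact/Zloc_int/frac_subr_int.
by apply: ZlocD => //; [apply: ZlocD | apply/Zloc_int/frac_subr_int].
Qed.

Lemma ppart_eq0 c : ppart c = 0 <-> Zloc p c.
Proof.
split=> [c0 | cp]; first by have [_ _] := ppartP c; rewrite c0 subr0.
apply: (ppart_spec_uniq (ppartP c)); split; rewrite ?subr0 ?lexx ?ltr01 //.
by apply: Zinvp_int; rewrite rpred0.
Qed.

Lemma ppart_id y : 0 <= y < 1 -> Zinvp p y -> ppart y = y.
Proof.
move=> y01 yp; apply: (ppart_spec_uniq (ppartP y)).
by split; rewrite // subrr Zloc0.
Qed.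

End PPart.

Lemma PG2_ppart_presentation p : prime p -> p <> 2%N ->
  [/\ is_hom_on Ghmul (PG p 2) QZadd (fun g => ppart p (gc g)),
      (forall g, PG p 2 g -> ZinvpZ p (ppart p (gc g))),
      (forall y, ZinvpZ p y -> exists g, PG p 2 g /\ ppart p (gc g) = y)
    & (forall g, PG p 2 g -> (ppart p (gc g) = 0 <-> PG p 3 g))].
Proof.
move=> p_prime p_neq2; split.
- by move=> g h /PG2_Gz_gc -> /PG2_Gz_gc ->; rewrite GzD ppart_fracD.
- by move=> g _; have [] := ppartP p_prime (gc g).
- move=> y [y01 yp]; exists (Gz y); split; last exact: ppart_id.
  apply: PG2_Gz => //; apply: Zinvp_Zloc yp => //.
  by apply/eqP => two_p; apply: p_neq2.
- move=> g g2; rewrite ppart_eq0 // PG3E //.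
  by split=> [cp | [_ cp]].
Qed.

Unset Implicit Arguments.

Theorem lemma3p4 (p : nat) (hp : prime p) :
  (* (1) *)
  ((forall g, PG p 1 g <->
      [/\ Ghat g, Zloc 2 (ga g / 2), Zloc 2 (gb g / 2) & gn g = 0]) /\
   (exists f : Gh -> ('Z_2 * 'Z_2 * int)%type,
      [/\ is_hom_on Ghmul Ghat +%R f,
          (forall y, exists g, Ghat g /\ f g = y)
        & (forall g, Ghat g -> (f g = 0 <-> PG p 1 g))])) /\
  (* (2) *)
  ((forall g, PG p 2 g <-> [/\ Ghat g, ga g = 0, gb g = 0 & gn g = 0]) /\
   (exists f : Gh -> SD,
      [/\ is_hom_on Ghmul Ghat SDmul f,
          (forall g, Ghat g -> SDcar (f g)),
          (forall u, SDcar u -> exists g, Ghat g /\ f g = u)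
        & (forall g, Ghat g -> (f g = SD1 <-> PG p 2 g))])) /\
  (* (3) *)
  ((forall g, PG p 3 g <-> PG p 2 g /\ Zloc p (gc g)) /\
   (p = 2%N -> forall g, PG p 2 g -> PG p 3 g) /\
   (p <> 2%N -> exists f : Gh -> rat,
      [/\ is_hom_on Ghmul (PG p 2) QZadd f,
          (forall g, PG p 2 g -> ZinvpZ p (f g)),
          (forall y, ZinvpZ p y -> exists g, PG p 2 g /\ f g = y)
        & (forall g, PG p 2 g -> (f g = 0 <-> PG p 3 g))]) /\
   (p = 2%N -> exists f : Gh -> SD,
      [/\ is_hom_on Ghmul Ghat SDmul f,
          (forall g, Ghat g -> SDcar (f g)),
          (forall u, SDcar u -> exists g, Ghat g /\ f g = u)
        & (forall g, Ghat g -> (f g = SD1 <-> PG p 3 g))]) /\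
   (p <> 2%N ->
      (forall g h, PG p 3 g -> Ghat h -> PG p 3 (Ghmul (Ghmul h g) (Ghinv h))) /\
      (forall g h, PG p 2 g -> Ghat h -> PG p 3 (Gcomm g h)) /\
      (exists pi : Gh -> SD,
        [/\ is_hom_on Ghmul Ghat SDmul pi,
            (forall g, Ghat g -> SDcar (pi g)),
            (forall u, SDcar u -> exists g, Ghat g /\ pi g = u)
          & (forall g, Ghat g -> (pi g = SD1 <-> PG p 2 g))]) /\
      (exists iota : Gh -> rat,
        [/\ is_hom_on Ghmul (PG p 2) QZadd iota,
            (forall g, PG p 2 g -> ZinvpZ p (iota g)),
            (forall y, ZinvpZ p y -> exists g, PG p 2 g /\ iota g = y)
          & (forall g, PG p 2 g -> (iota g = 0 <-> PG p 3 g))]))).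
Proof.
have PG2_Ghproj g : Ghat g -> PG p 2 g <-> [/\ ga g = 0, gb g = 0 & gn g = 0].
  by move=> g_Ghat; rewrite PG2E; split=> [[] | []].
have PG3_PG2 : p = 2%N -> forall g, PG p 3 g <-> PG p 2 g.
  by move=> p2 g; rewrite PG3E // p2; split=> [[] // | g2]; have [] := PG2_gc g2.
have PG1_Ghab2 g : Ghat g -> Ghab2 g = 0 <-> PG p 1 g.
  by move=> g_Ghat; rewrite Ghab2_eq0 PG1E; split=> [[] | []].
split; first by split; [exact: PG1E | exists Ghab2; split; [exact: Ghab2_hom | exact: Ghab2_onto |]].
split; first by split; [exact: PG2E | exists Ghproj; exact: Ghproj_presentation].
split; first exact: PG3E.
split; first by move=> /PG3_PG2 PG32 g /PG32.
split; first by move=> p_neq2; exists (fun g => ppart p (gc g)); exact: PG2_ppart_presentation.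
split.
  move=> p2; exists Ghproj; apply: Ghproj_presentation => g g_Ghat.
  by rewrite PG3_PG2 // PG2_Ghproj.
move=> p_neq2; split; first by move=> g h; apply: PG3_conj.
split; first by move=> g h; apply: PG2_comm.
split; first by exists Ghproj; exact: Ghproj_presentation.
by exists (fun g => ppart p (gc g)); exact: PG2_ppart_presentation.
Qed.
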